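(* Let $R=k[x_1,\dots,x_n]$ with the standard grading, let $G$ be a group acting on $R$ by permuting the variables, and let $I\subset R$ be a homogeneous ideal. Assume that every monomial initial ideal of $I$ is generated in degrees $\le d$. If $G$ acts monomially on $I$ up to degree $d$, then the action of $G$ on weight vectors induces automorphisms of the Gröbner fan of $I$: for each $g\in G$, the map $w\mapsto g(w)$ sends each equivalence class $C[w]$ onto an equivalence class $C[w']$, hence maps the Gröbner fan of $I$ onto itself.
   Context: For $h\in R$, $\mathrm{mon}(h)$ is the set of monomials appearing in $h$ with nonzero coefficient. $G$ acts monomially on $I$ up to degree $d$ if for every $h\in I$ of degree $\le d$ and every $g\in G$ there is $h'\in I$ with $\mathrm{mon}(h')=\mathrm{mon}(g(h))$. Writing $g(x_i)=x_{g(i)}$, for $w=(w_1,\dots,w_n)\in\mathbb{R}^n$ set $g(w)=(w_{g(1)},\dots,w_{g(n)})$. For $w\in\mathbb{R}^n$, $\mathrm{in}_w(I)$ is the ideal generated by the $w$-initial forms of elements of $I$, $C[w]=\{w'\in\mathbb{R}^n:\mathrm{in}_{w'}(I)=\mathrm{in}_w(I)\}$, and the Gröbner fan of $I$ is the fan formed by the closures of the sets $C[w]$. *)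

From HB Require Import structures.
From mathcomp Require Import all_boot all_order all_algebra all_fingroup.
From mathcomp Require Import reals.
From mathcomp Require Import mpoly.

Set Implicit Arguments.
Unset Strict Implicit.
Unset Printing Implicit Defensive.

Import Order.TTheory GRing.Theory Num.Theory.
Local Open Scope ring_scope.

Section GroebnerDefs.
Variables (n : nat) (k : fieldType) (R : realType).

Local Notation poly := {mpoly k[n]}.
Local Notation mono := 'X_{1..n}.

Definition is_ideal (I : poly -> Prop) : Prop :=
  [/\ I 0,
      (forall f g, I f -> I g -> I (f + g)) &
      (forall f h, I f -> I (h * f))].

Definition ideal_gen (S : poly -> Prop) (h : poly) : Prop :=
  exists l : seq (poly * poly),
    (forall x, x \in l -> S x.2) /\ h = \sum_(x <- l) x.1 * x.2.

Definition same_ideal (J1 J2 : poly -> Prop) : Prop :=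
  forall h, J1 h <-> J2 h.

Definition deg_le (h : poly) (d : nat) : Prop :=
  forall m, m \in msupp h -> (mdeg m <= d)%N.

Definition hcomp (e : nat) (h : poly) : poly :=
  \sum_(m <- msupp h | mdeg m == e) h@_m *: 'X_[m].

Definition homogeneous_ideal (I : poly -> Prop) : Prop :=
  is_ideal I /\ forall h e, I h -> I (hcomp e h).

Definition generated_in_deg_le (J : poly -> Prop) (d : nat) : Prop :=
  same_ideal J (ideal_gen (fun p => J p /\ deg_le p d)).

Definition term_order (le : rel mono) : Prop :=
  [/\ reflexive le, antisymmetric le, transitive le & total le] /\
  (forall m, le 0%MM m) /\
  (forall m1 m2 m, le m1 m2 -> le (m1 + m)%MM (m2 + m)%MM).

Definition lead_mon (le : rel mono) (f : poly) (m : mono) : Prop :=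
  m \in msupp f /\ forall m', m' \in msupp f -> le m' m.

Definition in_order (le : rel mono) (I : poly -> Prop) : poly -> Prop :=
  ideal_gen (fun p => exists f m, [/\ I f, f != 0, lead_mon le f m & p = 'X_[m]]).

Definition pact (g : {perm 'I_n}) (h : poly) : poly :=
  h \mPo [tuple ('X_(g i) : poly) | i < n].

Definition wact (g : {perm 'I_n}) (w : 'I_n -> R) : 'I_n -> R :=
  fun i => w (g i).

Definition acts_monomially (G : {set {perm 'I_n}}) (I : poly -> Prop) (d : nat)
  : Prop :=
  forall h g, I h -> deg_le h d -> g \in G ->
    exists h', I h' /\ msupp h' =i msupp (pact g h).

Definition wdeg (w : 'I_n -> R) (m : mono) : R := \sum_(i < n) w i * (m i)%:R.

Definition in_w (w : 'I_n -> R) (f : poly) : poly :=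
  \sum_(m <- msupp f | all (fun m' => wdeg w m' <= wdeg w m) (msupp f))
     f@_m *: 'X_[m].

Definition init_ideal (w : 'I_n -> R) (I : poly -> Prop) : poly -> Prop :=
  ideal_gen (fun p => exists f, I f /\ p = in_w w f).

Definition Cw (I : poly -> Prop) (w : 'I_n -> R) (w' : 'I_n -> R) : Prop :=
  same_ideal (init_ideal w' I) (init_ideal w I).

Definition closure_Rn (S : ('I_n -> R) -> Prop) (v : 'I_n -> R) : Prop :=
  forall e : R, 0 < e -> exists u, S u /\ forall i, `|u i - v i| < e.

Definition gfan_cone (I : poly -> Prop) (w : 'I_n -> R) : ('I_n -> R) -> Prop :=
  closure_Rn (Cw I w).

Definition wimage (g : {perm 'I_n}) (S : ('I_n -> R) -> Prop) : ('I_n -> R) -> Prop :=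
  fun v => exists u, S u /\ v = wact g u.

Definition same_wset (S1 S2 : ('I_n -> R) -> Prop) : Prop :=
  forall v, S1 v <-> S2 v.

End GroebnerDefs.

From HB Require Import structures.
From mathcomp Require Import all_boot all_order all_algebra all_fingroup.
From mathcomp Require Import reals.
From mathcomp Require Import mpoly.
From Stdlib Require Import Classical FunctionalExtensionality.

Set Implicit Arguments.
Unset Strict Implicit.
Unset Printing Implicit Defensive.

Import Order.TTheory GRing.Theory Num.Theory.
Local Open Scope ring_scope.

(* Let J be the image of I under g. Permuting variables identifies in_{g v}(I)
   with the image of in_v(J), so g(C[w]) = C[g w] follows once in_u(I) = in_w(I)
   implies in_u(J) = in_w(J); exchanging the roles of I and J gives the
   converse. Compare monomials by degree, then u-weight, then a fixed term
   order. When in_u(I) = in_w(I), take h in I whose u-leading monomial m0 is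
   the only u-leading monomial of I in its support. Its w-leading monomial
   leads in_w h, which lies in in_u(I), so it is a u-leading monomial of I as
   well, hence m0; then in_u h - in_w h is an element of in_u(I) containing no
   u-leading monomial of I, so in_u h = in_w h. By the degree bound, every
   u-leading monomial of J is a multiple of one, m0, of degree <= d, and the
   monomial action carries the h above to an element of J with the same
   support, hence again with equal u- and w-initial forms. Cancelling the
   leading terms of any f in J by multiples of such elements shows that in_u f
   lies in in_w(J). Closures commute with permutations of coordinates, which
   gives the statement for the cones. *)

Lemma sum_neq0 (V : nmodType) (T : eqType) (s : seq T) (F : T -> V) :
  \sum_(x <- s) F x != 0 -> has (fun x => F x != 0) s.
Proof.
apply: contraR => /hasPn F0; rewrite big1_seq // => x /andP[_ /F0].
by rewrite negbK => /eqP.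
Qed.

Lemma addr_eq_sub (V : zmodType) (x y z : V) : (x + y == z) = (y == z - x).
Proof. by rewrite [RHS]eq_sym subr_eq addrC. Qed.

Section MonomialRestriction.
Variables (n : nat) (k : nzRingType).
Local Notation poly := {mpoly k[n]}.
Local Notation mono := 'X_{1..n}.
Implicit Types (p q : poly) (m a : mono) (P Q : pred mono).

Definition mrestr P p : poly := \sum_(m <- msupp p | P m) p@_m *: 'X_[m].

Lemma mcoeff_mrestr P p m : (mrestr P p)@_m = if P m then p@_m else 0.
Proof.
rewrite /mrestr raddf_sum /= big_mkcond /=.
have [mp|mp] := boolP (m \in msupp p).
  rewrite (bigD1_seq m) ?msupp_uniq //= big1 ?addr0 => [|i /negbTE ine].
    by case: (P m); rewrite ?mcoeffZ ?mcoeffX ?eqxx ?mulr1.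
  by case: (P i); rewrite ?mcoeffZ ?mcoeffX ?ine ?mulr0.
move: (mp); rewrite -mcoeff_eq0 => /eqP p_m; rewrite p_m if_same big1 // => i _.
case: (P i); rewrite ?mcoeffZ ?mcoeffX //.
by case: eqP => [->|]; rewrite ?p_m ?mul0r ?mulr0.
Qed.

Lemma mrestr_is_linear P : linear (mrestr P).
Proof.
move=> c p q; apply/mpolyP => m.
by rewrite !(mcoeffD, mcoeffZ, mcoeff_mrestr); case: (P m); rewrite ?mulr0 ?addr0.
Qed.

HB.instance Definition _ P :=
  GRing.isLinear.Build k poly poly _ (mrestr P) (mrestr_is_linear P).

Lemma msupp_mrestr P p m : (m \in msupp (mrestr P p)) = P m && (m \in msupp p).
Proof. by rewrite !mcoeff_msupp mcoeff_mrestr; case: (P m); rewrite ?eqxx. Qed.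

Lemma eq_in_mrestr P Q p : {in msupp p, P =1 Q} -> mrestr P p = mrestr Q p.
Proof.
move=> PQ; apply/mpolyP => m; rewrite !mcoeff_mrestr.
have [/PQ -> //|] := boolP (m \in msupp p).
by rewrite -mcoeff_eq0 => /eqP ->; rewrite !if_same.
Qed.

Lemma mrestr_comp P Q p : mrestr P (mrestr Q p) = mrestr (predI P Q) p.
Proof. by apply/mpolyP => m; rewrite !mcoeff_mrestr /=; case: (P m); case: (Q m). Qed.

Lemma mrestr_eq0 P p : {in msupp p, forall m, ~~ P m} -> mrestr P p = 0.
Proof.
move=> nP; apply/mpolyP => m; rewrite mcoeff_mrestr mcoeff0.
have [/nP/negbTE -> //|] := boolP (m \in msupp p).
by rewrite -mcoeff_eq0 => /eqP ->; rewrite if_same.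
Qed.

Lemma mcoeffXM a q m :
  ('X_[a] * q)@_m = if (a <= m)%MM then q@_(m - a)%MM else 0.
Proof.
case: ifP => am; first by rewrite -commr_mpolyX -{1}(submK am) addmC mcoeffMX.
apply/eqP; rewrite mcoeff_eq0; apply/negP => /msuppM_le /allpairsP [[m1 m2]] /=.
by case; rewrite msuppX mem_seq1 => /eqP -> _ mE; rewrite mE lem_addr in am.
Qed.

Lemma mrestrXM P a q :
  mrestr P ('X_[a] * q) = 'X_[a] * mrestr (fun m => P (a + m)%MM) q.
Proof.
apply/mpolyP => m; rewrite mcoeff_mrestr !mcoeffXM mcoeff_mrestr.
case am: (a <= m)%MM; last by case: (P m).
by rewrite [(a + _)%MM]addmC submK.
Qed.

Lemma msuppXM a q m : m \in msupp ('X_[a] * q) ->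
  exists2 m', m' \in msupp q & m = (a + m')%MM.
Proof.
rewrite mcoeff_msupp mcoeffXM; case: ifP => am; last by rewrite eqxx.
by rewrite -mcoeff_msupp; exists (m - a)%MM; rewrite // addmC submK.
Qed.

Lemma msuppM_dvd p q m : m \in msupp (p * q) -> exists2 m', m' \in msupp q & (m' <= m)%MM.
Proof. by move/msuppM_le/allpairsP => [[m1 m2] /= [_ m2q ->]]; exists m2; rewrite ?lem_addl. Qed.

Lemma msupp_sumM_dvd (l : seq (poly * poly)) m : m \in msupp (\sum_(x <- l) x.1 * x.2) ->
  exists2 x, x \in l & exists2 m', m' \in msupp x.2 & (m' <= m)%MM.
Proof.
rewrite mcoeff_msupp raddf_sum => /sum_neq0 /hasP [x xl].
by rewrite -mcoeff_msupp => /msuppM_dvd; exists x.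
Qed.

End MonomialRestriction.

Section Ideals.
Variables (n : nat) (k : fieldType).
Local Notation poly := {mpoly k[n]}.
Implicit Types (p q h : poly) (S J : poly -> Prop).

Section IdealLaws.
Variable J : poly -> Prop.
Hypothesis idJ : is_ideal J.

Lemma ideal0 : J 0. Proof. by case: idJ. Qed.

Lemma idealD p q : J p -> J q -> J (p + q). Proof. by case: idJ => _ + _; apply. Qed.

Lemma idealMl h p : J p -> J (h * p). Proof. by case: idJ => _ _; apply. Qed.

Lemma idealZ c p : J p -> J (c *: p). Proof. by rewrite -mul_mpolyC; apply: idealMl. Qed.

Lemma idealB p q : J p -> J q -> J (p - q).
Proof. by move=> Jp Jq; rewrite -scaleN1r; apply: idealD Jp (idealZ _ Jq). Qed.

Lemma ideal_sum (T : Type) (s : seq T) (F : T -> poly) :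
  (forall x, J (F x)) -> J (\sum_(x <- s) F x).
Proof. by move=> JF; elim/big_rec: _ => [|x p _ Jp]; [exact: ideal0 | exact: idealD (JF x) Jp]. Qed.

End IdealLaws.

Lemma is_ideal_gen S : is_ideal (ideal_gen S).
Proof.
split=> [|_ _ [l1 [S1 ->]] [l2 [S2 ->]]|_ h [l [Sl ->]]].
- by exists [::]; rewrite big_nil.
- exists (l1 ++ l2); rewrite big_cat; split=> // x.
  by rewrite mem_cat => /orP[/S1|/S2].
- exists [seq (h * x.1, x.2) | x <- l]; split=> [_ /mapP [x xl ->]|]; first exact: (Sl _ xl).
  by rewrite big_map mulr_sumr; apply: eq_bigr => x _; rewrite mulrA.
Qed.

Lemma ideal_gen_sub S p : S p -> ideal_gen S p.
Proof.
by exists [:: (1, p)]; rewrite big_seq1 mul1r; split=> // x; rewrite mem_seq1 => /eqP ->.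
Qed.

Lemma ideal_gen_min S J : is_ideal J -> (forall p, S p -> J p) ->
  forall h, ideal_gen S h -> J h.
Proof.
move=> idJ SJ _ [l [Sl ->]]; rewrite big_seq; elim/big_rec: _ => [|x p xl Jp].
  exact: ideal0.
by apply: (idealD idJ) Jp; apply/(idealMl idJ)/SJ; exact: (Sl _ xl).
Qed.

Lemma is_ideal_preim (f : {rmorphism poly -> poly}) J :
  is_ideal J -> is_ideal (fun h => J (f h)).
Proof.
move=> idJ; split=> [|p q|h p]; rewrite ?rmorph0 ?rmorphD ?rmorphM.
- exact: ideal0.
- exact: idealD.
- exact: idealMl.
Qed.

End Ideals.

Section WeightedTermOrder.
Variables (n : nat) (R : realType).
Local Notation mono := 'X_{1..n}.
Implicit Types (m : mono) (w : 'I_n -> R).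

Lemma wdegD w m1 m2 : wdeg w (m1 + m2)%MM = wdeg w m1 + wdeg w m2.
Proof. by rewrite /wdeg -big_split; apply: eq_bigr => i _; rewrite mnmDE natrD mulrDr. Qed.

Definition wkey w m : nat *l (R *l mono) := (mdeg m, (wdeg w m, m)).

Definition lew w : rel mono := fun m1 m2 => (wkey w m1 <= wkey w m2)%O.

Lemma lew_refl w : reflexive (lew w). Proof. by move=> m; exact: lexx. Qed.

Lemma lew_trans w : transitive (lew w). Proof. by move=> m2 m1 m3; exact: le_trans. Qed.

Lemma lew_total w : total (lew w). Proof. by move=> m1 m2; exact: le_total. Qed.

Lemma lew_anti w : antisymmetric (lew w).
Proof. by move=> m1 m2 /le_anti /(congr1 (snd \o snd)). Qed.

Lemma lew_addr w m1 m2 m : lew w m1 m2 -> lew w (m1 + m)%MM (m2 + m)%MM.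
Proof.
rewrite /lew /wkey !lexi_pair !leEnat !mdegD !wdegD !leq_add2r !lerD2r.
by rewrite ![(_ + m)%MM]addmC lemc_add2r.
Qed.

Lemma term_order_lew w : term_order (lew w).
Proof.
split; first by split; [exact: lew_refl | exact: lew_anti | exact: lew_trans | exact: lew_total].
split=> [m|]; last exact: lew_addr.
have [/eqP|dm] := posnP (mdeg m); first by rewrite mdeg_eq0 => /eqP ->; exact: lew_refl.
by rewrite /lew /wkey lexi_pair !leEnat mdeg0 leq0n leqNgt dm.
Qed.

Lemma lew_homog w m1 m2 : mdeg m1 = mdeg m2 ->
  lew w m1 m2 = (wdeg w m1 <= wdeg w m2) && ((wdeg w m2 <= wdeg w m1) ==> (m1 <= m2)%O).
Proof. by move=> e; rewrite /lew /wkey !lexi_pair e lexx. Qed.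

Lemma lew_wdeg w m1 m2 : mdeg m1 = mdeg m2 -> lew w m1 m2 -> wdeg w m1 <= wdeg w m2.
Proof. by move=> e; rewrite lew_homog // => /andP[]. Qed.

End WeightedTermOrder.

Section MaxInSeq.
Variables (T : eqType) (le : rel T).
Hypotheses (total_le : total le) (trans_le : transitive le).

Lemma max_in_seq (s : seq T) (P : T -> Prop) : (exists2 x, x \in s & P x) ->
  exists x, [/\ x \in s, P x & forall y, y \in s -> P y -> le y x].
Proof.
have le_refl x : le x x by have := total_le x x; rewrite orbb.
elim: s => [[x //]|a s IH] exP.
have [[y ys Py]|noP] := classic (exists2 y, y \in s & P y).
  have [z [zs Pz zmax]] := IH (ex_intro2 _ _ y ys Py).
  have [[Pa za]|not_za] := classic (P a /\ le z a).
    exists a; split; rewrite ?mem_head // => x; rewrite in_cons => /orP[/eqP-> //|xs Px].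
    exact: trans_le _ _ _ (zmax x xs Px) za.
  exists z; split; rewrite ?in_cons ?zs ?orbT // => x.
  rewrite in_cons => /orP[/eqP-> Pa|]; last exact: zmax.
  by case/orP: (total_le a z) => // za; case: not_za.
have Pa : P a.
  by case: exP => x; rewrite in_cons => /orP[/eqP-> //|xs Px]; case: noP; exists x.
exists a; split; rewrite ?mem_head // => x; rewrite in_cons => /orP[/eqP-> //|xs Px].
by case: noP; exists x.
Qed.

End MaxInSeq.

Lemma mdeg_wf_ind n (le : rel 'X_{1..n}) e (P : 'X_{1..n} -> Prop) :
  transitive le -> antisymmetric le ->
  (forall m, mdeg m = e ->
     (forall m', mdeg m' = e -> le m' m -> m' != m -> P m') -> P m) ->
  forall m, mdeg m = e -> P m.
Proof.
move=> trans_le anti_le IH.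
pose below m := [set x : 'X_{1..n < e.+1} | le (val x) m && (val x != m)].
suff: forall N m, mdeg m = e -> (#|below m| <= N)%N -> P m by move=> + m dm; apply.
elim=> [|N IHN] m dm sizeN; apply: IH => // m' dm' le_m'm m'm.
  have dm'' : (mdeg m' < e.+1)%N by rewrite dm'.
  have : BMultinom dm'' \in below m by rewrite inE /= le_m'm m'm.
  by move: sizeN; rewrite leqn0 => /eqP/cards0_eq ->; rewrite inE.
apply: IHN => //; have dm'' : (mdeg m' < e.+1)%N by rewrite dm'.
rewrite -ltnS; apply: leq_trans sizeN; apply/proper_card/properP; split.
  apply/subsetP => x; rewrite !inE => /andP[le_xm' xm'].
  rewrite (trans_le _ _ _ le_xm' le_m'm) /=; apply: contraNneq m'm => xm.
  by apply/eqP/anti_le; rewrite le_m'm -xm le_xm'.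
by exists (BMultinom dm''); rewrite !inE /= ?le_m'm ?m'm ?eqxx ?andbF.
Qed.

Section WeightParts.
Variables (n : nat) (k : fieldType) (R : realType).
Local Notation poly := {mpoly k[n]}.
Local Notation mono := 'X_{1..n}.
Implicit Types (p F : poly) (m : mono) (u w : 'I_n -> R).

Definition wpart u (g : R) F := mrestr (fun m => wdeg u m == g) F.

Lemma in_wE u F :
  in_w u F = mrestr (fun m => all (fun m' => wdeg u m' <= wdeg u m) (msupp F)) F.
Proof. by []. Qed.

Lemma msupp_hcomp e F m : (m \in msupp (hcomp e F)) = (mdeg m == e) && (m \in msupp F).
Proof. exact: msupp_mrestr. Qed.

Lemma lead_exists (le : rel mono) p : total le -> transitive le -> p != 0 ->
  exists m, lead_mon le p m.
Proof.
move=> total_le trans_le /mlead_supp mp.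
have [m [mp' _ mmax]] :=
  max_in_seq total_le trans_le (P := fun=> True) (ex_intro2 _ _ (mlead p) mp I).
by exists m; split=> // m' /mmax; apply.
Qed.

Lemma lead_mon_mlead p : p != 0 -> lead_mon <=%O p (mlead p).
Proof. by move=> /mlead_supp mp; split=> // m /msupp_le_mlead. Qed.

Lemma lead_mon_eq_msupp (le : rel mono) p p' m : msupp p' =i msupp p ->
  lead_mon le p m -> lead_mon le p' m.
Proof. by move=> E [mp lep]; split=> [|m']; rewrite E //; apply: lep. Qed.

Lemma dhomog_eq_msupp e p p' : msupp p' =i msupp p -> p \is e.-homog -> p' \is e.-homog.
Proof. by move=> E /dhomogP hp; apply/dhomogP => m; rewrite E; apply: hp. Qed.

Lemma dhomog_mdeg_eq e F x y : F \is e.-homog -> x \in msupp F -> y \in msupp F ->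
  mdeg x = mdeg y.
Proof. by move=> hF xF yF; rewrite (dhomog_mf hF xF) (dhomog_mf hF yF). Qed.

Lemma in_w_wmax u F m : m \in msupp F -> {in msupp F, forall x, wdeg u x <= wdeg u m} ->
  in_w u F = wpart u (wdeg u m) F.
Proof.
move=> mF mmax; apply: eq_in_mrestr => x xF /=.
apply/allP/eqP => [xmax|->]; last exact: mmax.
by apply/le_anti; rewrite mmax ?xmax.
Qed.

Lemma in_w_lead u e F m : F \is e.-homog -> lead_mon (lew u) F m ->
  in_w u F = wpart u (wdeg u m) F.
Proof.
move=> hF [mF leF]; apply: in_w_wmax => // x xF.
exact: lew_wdeg (dhomog_mdeg_eq hF xF mF) (leF _ xF).
Qed.

Lemma in_w_top u F :
  exists g, in_w u F = wpart u g F /\ {in msupp F, forall x, wdeg u x <= g}.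
Proof.
have [->|nzF] := eqVneq F 0; first by exists 0; rewrite in_wE /wpart !linear0 msupp0.
have [m [mF mmax]] := lead_exists (fun a b => le_total (wdeg u a) (wdeg u b))
  (fun b a c => @le_trans _ _ (wdeg u b) (wdeg u a) (wdeg u c)) nzF.
by exists (wdeg u m); rewrite (in_w_wmax mF mmax).
Qed.

Lemma in_w_eq_msupp u w F F' : msupp F' =i msupp F ->
  in_w u F = in_w w F -> in_w u F' = in_w w F'.
Proof.
move=> E /mpolyP uw; rewrite !in_wE; apply: eq_in_mrestr => x xF' /=.
rewrite !(eq_all_r E); move: (uw x) xF'; rewrite !in_wE !mcoeff_mrestr E mcoeff_msupp.
by case: (all _ _); case: (all _ _) => // -> ; rewrite eqxx.
Qed.

Lemma wpart_lead u e F m : F \is e.-homog -> lead_mon (lew u) F m ->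
  lead_mon <=%O (wpart u (wdeg u m) F) m.
Proof.
move=> hF [mF leF]; split=> [|y]; rewrite msupp_mrestr ?eqxx ?mF // => /andP[/eqP wy yF].
by move: (leF _ yF); rewrite lew_homog ?wy ?lexx // (dhomog_mdeg_eq hF yF mF).
Qed.

Lemma lead_of_wpart u e g F m : F \is e.-homog -> {in msupp F, forall x, wdeg u x <= g} ->
  lead_mon <=%O (wpart u g F) m -> lead_mon (lew u) F m.
Proof.
move=> hF wF [+ leF]; rewrite msupp_mrestr => /andP[/eqP wm mF]; split=> // y yF.
rewrite lew_homog ?(dhomog_mdeg_eq hF yF mF) // wm wF //=; apply/implyP => gy; apply: leF.
by rewrite msupp_mrestr yF andbT eq_le wF.
Qed.

Lemma wpart_below u e g F m : F \is e.-homog -> lead_mon (lew u) F m -> wdeg u m < g ->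
  wpart u g F = 0.
Proof.
move=> hF [mF leF] mg; apply: mrestr_eq0 => x xF /=.
rewrite lt_eqF //; apply: le_lt_trans mg.
exact: lew_wdeg (dhomog_mdeg_eq hF xF mF) (leF _ xF).
Qed.

Lemma lead_mon_hcomp u F m : lead_mon (lew u) F m -> lead_mon (lew u) (hcomp (mdeg m) F) m.
Proof.
by case=> mF leF; split=> [|y]; rewrite msupp_hcomp ?eqxx ?mF // => /andP[_ /leF].
Qed.

End WeightParts.

Definition lead_in n (k : fieldType) (R : realType) (J : {mpoly k[n]} -> Prop)
    (v : 'I_n -> R) (m : 'X_{1..n}) :=
  exists F, [/\ J F, F \is (mdeg m).-homog & lead_mon (lew v) F m].

Section InitialIdealLift.
Variables (n : nat) (k : fieldType) (R : realType) (J : {mpoly k[n]} -> Prop).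
Hypothesis homJ : homogeneous_ideal J.
Local Notation poly := {mpoly k[n]}.
Implicit Types (p F : poly) (m a : 'X_{1..n}) (v : 'I_n -> R).

Definition bipart v (g : R) (e : nat) p :=
  mrestr (fun m => (wdeg v m == g) && (mdeg m == e)) p.

Definition wtop_lift v g e q := exists F, [/\ J F, F \is e.-homog,
  {in msupp F, forall m, wdeg v m <= g} & wpart v g F = q].

(* The invariant by which leading monomials of in_v(J) are seen to be leading
   monomials of J for [lew v] (see [lead_in_init]). *)
Definition init_liftable v p := forall g e, wtop_lift v g e (bipart v g e p).

Let idJ : is_ideal J := homJ.1.

Lemma wtop_lift0 v g e : wtop_lift v g e 0.
Proof.
exists 0; rewrite /wpart linear0 rpred0; split=> // [|m]; first exact: ideal0.
by rewrite msupp0.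
Qed.

Lemma wtop_liftD v g e q1 q2 :
  wtop_lift v g e q1 -> wtop_lift v g e q2 -> wtop_lift v g e (q1 + q2).
Proof.
move=> [F1 [JF1 hF1 wF1 <-]] [F2 [JF2 hF2 wF2 <-]].
exists (F1 + F2); rewrite /wpart linearD rpredD //; split=> //; first exact: idealD.
by move=> m /msuppD_le; rewrite mem_cat => /orP[/wF1|/wF2].
Qed.

Lemma wtop_liftZ v g e c q : wtop_lift v g e q -> wtop_lift v g e (c *: q).
Proof.
move=> [F [JF hF wF <-]]; exists (c *: F); rewrite /wpart linearZ rpredZ //.
by split=> //; [exact: idealZ | move=> m /msuppZ_le /wF].
Qed.

Lemma init_liftable0 v : init_liftable v 0.
Proof. by move=> g e; rewrite /bipart linear0; exact: wtop_lift0. Qed.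

Lemma init_liftableD v p q : init_liftable v p -> init_liftable v q -> init_liftable v (p + q).
Proof. by move=> Lp Lq g e; rewrite /bipart linearD; exact: wtop_liftD. Qed.

Lemma init_liftableZ v c p : init_liftable v p -> init_liftable v (c *: p).
Proof. by move=> Lp g e; rewrite /bipart linearZ; exact: wtop_liftZ. Qed.

Lemma init_liftableXM v a p : init_liftable v p -> init_liftable v ('X_[a] * p).
Proof.
move=> Lp g e; have [ae|ea] := leqP (mdeg a) e; last first.
  rewrite /bipart mrestrXM mrestr_eq0 ?mulr0; first exact: wtop_lift0.
  move=> m _ /=; rewrite mdegD gtn_eqF ?andbF //.
  exact: leq_trans ea (leq_addr _ _).
have [F [JF hF wF eF]] := Lp (g - wdeg v a) (e - mdeg a)%N.
exists ('X_[a] * F); split.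
- exact: idealMl.
- by rewrite -(subnKC ae) dhomogM ?dhomogX.
- by move=> _ /msuppXM [m mF ->]; rewrite wdegD -lerBrDl wF.
rewrite /wpart /bipart !mrestrXM; congr (_ * _).
have -> : mrestr (fun m => wdeg v (a + m)%MM == g) F = wpart v (g - wdeg v a) F.
  by apply: eq_in_mrestr => m _ /=; rewrite wdegD addr_eq_sub.
rewrite eF; apply: eq_in_mrestr => m _ /=.
by rewrite wdegD mdegD addr_eq_sub -{2}(subnKC ae) eqn_add2l.
Qed.

Lemma is_ideal_init_liftable v : is_ideal (init_liftable v).
Proof.
split=> [|p q|p h Lp]; [exact: init_liftable0 | exact: init_liftableD |].
rewrite (mpolyE h) big_distrl /=; elim/big_rec: _ => [|a q _ Lq]; first exact: init_liftable0.
by apply: init_liftableD Lq; rewrite -scalerAl; apply/init_liftableZ/init_liftableXM.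
Qed.

Lemma init_liftable_in_w v f : J f -> init_liftable v (in_w v f).
Proof.
move=> Jf g e; have [g0 [-> wf]] := in_w_top v f; have [<-|gg0] := eqVneq g0 g.
  exists (hcomp e f); split.
  - exact: homJ.2.
  - exact: pihomogP.
  - by move=> m; rewrite msupp_hcomp => /andP[_ /wf].
  rewrite /wpart /bipart !mrestr_comp; apply: eq_in_mrestr => m _ /=.
  by case: (wdeg v m == _); case: (mdeg m == e).
rewrite /bipart mrestr_comp mrestr_eq0; first exact: wtop_lift0.
move=> m _ /=; apply/negP => /andP[/andP[/eqP wg _] /eqP wm].
by move: gg0; rewrite -wg wm eqxx.
Qed.

Lemma init_ideal_liftable v p : init_ideal v J p -> init_liftable v p.
Proof.
apply: ideal_gen_min; first exact: is_ideal_init_liftable.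
by move=> _ [f [Jf ->]]; exact: init_liftable_in_w.
Qed.

Lemma lead_in_init v p m : init_ideal v J p -> lead_mon <=%O p m -> lead_in J v m.
Proof.
move=> Ip [mp lep]; have [F [JF hF wF eF]] := init_ideal_liftable Ip (wdeg v m) (mdeg m).
exists F; split => //; apply: (lead_of_wpart hF wF); rewrite eF; split.
  by rewrite msupp_mrestr !eqxx mp.
by move=> y; rewrite msupp_mrestr => /andP[_ /lep].
Qed.

End InitialIdealLift.

Definition reduced n (k : fieldType) (R : realType) (J : {mpoly k[n]} -> Prop)
    (u : 'I_n -> R) (m0 : 'X_{1..n}) (G : {mpoly k[n]}) :=
  [/\ J G, G \is (mdeg m0).-homog, lead_mon (lew u) G m0 &
      {in msupp G, forall m, m != m0 -> ~ lead_in J u m}].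

Section Reduction.
Variables (n : nat) (k : fieldType) (R : realType) (J : {mpoly k[n]} -> Prop).
Variable u : 'I_n -> R.
Hypothesis idJ : is_ideal J.
Local Notation poly := {mpoly k[n]}.
Implicit Types (F : poly) (m : 'X_{1..n}).

Lemma reduce_lead_in e F m0 m2 : J F -> F \is e.-homog -> lead_mon (lew u) F m0 ->
  m2 \in msupp F -> m2 != m0 -> lead_in J u m2 ->
  exists F', [/\ J F', F' \is e.-homog, lead_mon (lew u) F' m0, m2 \notin msupp F' &
    {in msupp F', forall y, (y \in msupp F) || lew u y m2}].
Proof.
move=> JF hF [m0F le_m0] m2F m2m0 [F2 [JF2 hF2 [m2F2 le_m2]]].
rewrite (dhomog_mf hF m2F) in hF2.
have nz2 : F2@_m2 != 0 by rewrite -mcoeff_msupp.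
have m2_m0 : lew u m2 m0 := le_m0 _ m2F.
have F2m0 : F2@_m0 = 0.
  apply/eqP; rewrite mcoeff_eq0; apply: contra m2m0 => /le_m2 m0_m2.
  by rewrite (lew_anti (introT andP (conj m2_m0 m0_m2))).
have suppF' y : y \in msupp (F - (F@_m2 / F2@_m2) *: F2) ->
    (y \in msupp F) || (y \in msupp F2).
  by move/msuppB_le; rewrite mem_cat => /orP[->|/msuppZ_le ->]; rewrite ?orbT.
exists (F - (F@_m2 / F2@_m2) *: F2); split.
- exact (idealB idJ JF (idealZ idJ _ JF2)).
- by rewrite rpredB ?rpredZ.
- split=> [|y /suppF' /orP[/le_m0 //|/le_m2 y_m2]]; last exact: lew_trans y_m2 m2_m0.
  by rewrite mcoeff_msupp mcoeffB mcoeffZ F2m0 mulr0 subr0 -mcoeff_msupp.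
- by rewrite mcoeff_msupp mcoeffB mcoeffZ mulfVK // subrr eqxx.
- by move=> y /suppF' /orP[->|/le_m2 ->]; rewrite ?orbT.
Qed.

Lemma exists_reduced m0 : lead_in J u m0 -> exists G, reduced J u m0 G.
Proof.
case=> F0 [JF0 hF0 lF0]; set e := mdeg m0 in hF0 *.
(* Induction on a strict bound m1 for the monomials of F, other than m0, that
   are leading monomials of J. *)
pose Q m1 := forall F, J F -> F \is e.-homog -> lead_mon (lew u) F m0 ->
  (forall x, x \in msupp F -> x != m0 -> lead_in J u x -> lew u x m1 && (x != m1)) ->
  exists G, reduced J u m0 G.
suff Qm1 : forall m1, mdeg m1 = e -> Q m1.
  apply: (Qm1 m0 erefl F0) => // x xF0 xm0 _; rewrite xm0 andbT; exact: lF0.2.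
apply: (@mdeg_wf_ind _ (lew u) e Q (@lew_trans _ _ u) (@lew_anti _ _ u)).
move=> m1 dm1 IH F JF hF lF below.
have [[x xF [xm0 xlead]]|clean] :=
    classic (exists2 x, x \in msupp F & x != m0 /\ lead_in J u x); last first.
  by exists F; split=> // x xF xm0 xlead; apply: clean; exists x.
have [m2 [m2F [m2m0 m2lead] m2max]] := max_in_seq (@lew_total _ _ u) (@lew_trans _ _ u)
  (P := fun x => x != m0 /\ lead_in J u x) (ex_intro2 _ _ x xF (conj xm0 xlead)).
have /andP[m2_m1 m2m1] := below _ m2F m2m0 m2lead.
have [F' [JF' hF' lF' m2F' suppF']] := reduce_lead_in JF hF lF m2F m2m0 m2lead.
apply: (IH m2 (dhomog_mf hF m2F) m2_m1 m2m1 F' JF' hF' lF') => y yF' ym0 ylead.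
have -> : y != m2 by apply: contraNneq m2F' => <-.
by case/orP: (suppF' y yF') => [yF|->] //; rewrite andbT m2max.
Qed.

End Reduction.

Section EqualInitialIdeals.
Variables (n : nat) (k : fieldType) (R : realType) (J : {mpoly k[n]} -> Prop).
Variables (u w : 'I_n -> R).
Hypothesis homJ : homogeneous_ideal J.
Hypothesis Juw : same_ideal (init_ideal u J) (init_ideal w J).
Implicit Types (F G : {mpoly k[n]}) (m : 'X_{1..n}).

Lemma lead_in_init_eq m : lead_in J w m -> lead_in J u m.
Proof.
case=> F [JF hF lF]; apply: (lead_in_init homJ (p := in_w w F)).
  by apply/Juw/ideal_gen_sub; exists F.
by rewrite (in_w_lead hF lF); exact: wpart_lead hF lF.
Qed.

Lemma in_w_reduced m0 G : reduced J u m0 G -> in_w u G = in_w w G.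
Proof.
case=> JG hG lG not_lead.
have nzG : G != 0 by apply: contraTneq lG.1 => ->; rewrite msupp0.
have [m1 lG1] := lead_exists (@lew_total _ _ w) (@lew_trans _ _ w) nzG.
have m1u : lead_in J u m1.
  by apply: lead_in_init_eq; exists G; rewrite (dhomog_mf hG lG1.1).
have m10 : m1 = m0 by apply/eqP; apply: contraT => m1m0; case: (not_lead _ lG1.1 m1m0).
rewrite m10 in lG1; rewrite (in_w_lead hG lG) (in_w_lead hG lG1).
set q := wpart u (wdeg u m0) G - wpart w (wdeg w m0) G.
apply/eqP; rewrite -subr_eq0 -/q.
apply: contraT => nzq; exfalso.
have Iq : init_ideal u J q.
  apply: idealB; first exact: is_ideal_gen.
    by rewrite -(in_w_lead hG lG); apply: ideal_gen_sub; exists G.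
  by apply/Juw; rewrite -(in_w_lead hG lG1); apply: ideal_gen_sub; exists G.
have [mq_q _] := lead_mon_mlead nzq.
have mq_G : mlead q \in msupp G.
  by move/msuppB_le: mq_q; rewrite mem_cat !msupp_mrestr => /orP[]/andP[].
apply: (not_lead _ mq_G) (lead_in_init homJ Iq (lead_mon_mlead nzq)).
apply: contraTneq mq_q => ->.
by rewrite mcoeff_msupp mcoeffB !mcoeff_mrestr !eqxx subrr eqxx.
Qed.

End EqualInitialIdeals.

Definition supp_transfer n (k : fieldType) (d : nat) (J1 J2 : {mpoly k[n]} -> Prop) :=
  forall f, J1 f -> deg_le f d -> exists f', J2 f' /\ msupp f' =i msupp f.

Definition low_degree_leads n (k : fieldType) (d : nat) (le : rel 'X_{1..n})
    (J : {mpoly k[n]} -> Prop) :=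
  forall F m, J F -> lead_mon le F m ->
    exists F0 m0, [/\ J F0, lead_mon le F0 m0, (m0 <= m)%MM & (mdeg m0 <= d)%N].

Lemma low_degree_leads_gen n (k : fieldType) d (le : rel 'X_{1..n})
    (J : {mpoly k[n]} -> Prop) :
  generated_in_deg_le (in_order le J) d -> low_degree_leads d le J.
Proof.
move=> genJ F m JF lF.
have Xm : in_order le J 'X_[m].
  apply: ideal_gen_sub; exists F, m; split => //.
  by apply: contraTneq lF.1 => ->; rewrite msupp0.
have [l [lgen lE]] := (genJ _).1 Xm.
have [x xl [m1 m1x m1m]] : exists2 x, x \in l & exists2 m1, m1 \in msupp x.2 & (m1 <= m)%MM.
  by apply: msupp_sumM_dvd; rewrite -lE msuppX mem_seq1.
have [[l' [l'gen l'E]] degx] := lgen x xl.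
have [y yl' [m0 m0y m0m1]] : exists2 y, y \in l' & exists2 m0, m0 \in msupp y.2 & (m0 <= m1)%MM.
  by apply: msupp_sumM_dvd; rewrite -l'E.
have [F0 [m0' [JF0 _ lF0 y2]]] := l'gen y yl'.
move: m0y; rewrite y2 msuppX mem_seq1 => /eqP m00; subst m0'.
exists F0, m0; split => //; first exact: lepm_trans m0m1 m1m.
by apply: leq_trans (degx _ m1x); rewrite -(submK m0m1) mdegD leq_addl.
Qed.

Section InitialIdealTransfer.
Variables (n : nat) (k : fieldType) (R : realType) (d : nat).
Variables (J J' : {mpoly k[n]} -> Prop).
Hypotheses (homJ : homogeneous_ideal J) (homJ' : homogeneous_ideal J').
Hypotheses (toJ' : supp_transfer d J J') (toJ : supp_transfer d J' J).
Hypothesis lowJ' : forall v : 'I_n -> R, low_degree_leads d (lew v) J'.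
Local Notation poly := {mpoly k[n]}.
Implicit Types (f F G H : poly) (m : 'X_{1..n}).

Let idJ' : is_ideal J' := homJ'.1.

Section Inclusion.
Variables (u w : 'I_n -> R).
Hypothesis Juw : same_ideal (init_ideal u J) (init_ideal w J).

Lemma stable_lift F0 m0 : J' F0 -> lead_mon (lew u) F0 m0 -> (mdeg m0 <= d)%N ->
  exists G, [/\ J' G, G \is (mdeg m0).-homog, lead_mon (lew u) G m0 & in_w u G = in_w w G].
Proof.
move=> JF0 lF0 dm0; set F1 := hcomp (mdeg m0) F0.
have hF1 : F1 \is (mdeg m0).-homog by exact: pihomogP.
have [f [Jf sf]] : exists f, J f /\ msupp f =i msupp F1.
  by apply: toJ (homJ'.2 _ _ JF0) _ => x /(dhomog_mf hF1) ->.
have [G [JG hG lG not_lead]] : exists G, reduced J u m0 G.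
  apply: (exists_reduced homJ.1); exists f; split => //.
  - exact: dhomog_eq_msupp sf hF1.
  - exact: lead_mon_eq_msupp sf (lead_mon_hcomp lF0).
have eG := in_w_reduced homJ Juw (And4 JG hG lG not_lead).
have [G' [JG' sG']] : exists G', J' G' /\ msupp G' =i msupp G.
  by apply: toJ' JG _ => x /(dhomog_mf hG) ->.
exists G'; split => //.
- exact: dhomog_eq_msupp sG' hG.
- exact: lead_mon_eq_msupp sG' lG.
- exact: in_w_eq_msupp sG' eG.
Qed.

Lemma cancel_lead F m : J' F -> lead_mon (lew u) F m ->
  exists H, [/\ J' H, H \is (mdeg m).-homog, {in msupp H, forall x, lew u x m},
    H@_m = F@_m & init_ideal w J' (wpart u (wdeg u m) H)].
Proof.
move=> JF lF; have [F0 [m0 [JF0 lF0 m0m dm0]]] := lowJ' JF lF.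
have [G [JG hG lG eG]] := stable_lift JF0 lF0 dm0.
set a := (m - m0)%MM; have ma : m = (a + m0)%MM by rewrite /a submK.
have nzG : G@_m0 != 0 by rewrite -mcoeff_msupp; case: lG.
have XGm : ('X_[a] * G)@_m = G@_m0.
  by rewrite ma mcoeffXM lem_addr [(a + m0)%MM]addmC addmK.
exists ((F@_m / G@_m0) *: ('X_[a] * G)); split.
- exact (idealZ idJ' _ (idealMl idJ' _ JG)).
- by rewrite rpredZ // ma mdegD dhomogM ?dhomogX.
- move=> _ /msuppZ_le /msuppXM [x xG ->]; rewrite ma addmC [(a + m0)%MM]addmC.
  by apply: lew_addr; case: lG => _; apply.
- by rewrite mcoeffZ XGm divfK.
rewrite /wpart linearZ /= mrestrXM; apply: idealZ; first exact: is_ideal_gen.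
apply: idealMl; first exact: is_ideal_gen.
have -> : mrestr (fun x => wdeg u (a + x)%MM == wdeg u m) G = wpart u (wdeg u m0) G.
  by apply: eq_in_mrestr => x _; rewrite /= ma !wdegD (inj_eq (addrI _)).
by rewrite -(in_w_lead hG lG) eG; apply: ideal_gen_sub; exists G.
Qed.

Lemma wpart_lead_init e m : mdeg m = e -> forall F, J' F -> F \is e.-homog ->
  lead_mon (lew u) F m -> init_ideal w J' (wpart u (wdeg u m) F).
Proof.
move: m; apply: (mdeg_wf_ind (@lew_trans _ _ u) (@lew_anti _ _ u)).
move=> m dm IH F JF hF lF.
have [H [JH hH le_Hm Hm IH_H]] := cancel_lead JF lF.
rewrite -(subrK H F) /wpart linearD /=; apply: idealD IH_H; first exact: is_ideal_gen.
rewrite -/(wpart u (wdeg u m) (F - H)); set F2 := F - H.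
have JF2 : J' F2 by exact (idealB idJ' JF JH).
have hF2 : F2 \is e.-homog by rewrite rpredB // -dm.
have le_F2m : {in msupp F2, forall x, lew u x m}.
  by move=> x /msuppB_le; rewrite mem_cat => /orP[|/le_Hm //]; case: lF => _; apply.
have [->|nzF2] := eqVneq F2 0; first by rewrite /wpart linear0; exact: ideal0 (is_ideal_gen _).
have [m2 lF2] := lead_exists (@lew_total _ _ u) (@lew_trans _ _ u) nzF2.
have dm2 : mdeg m2 = e := dhomog_mf hF2 lF2.1.
have m2m : m2 != m.
  by apply: contraTneq lF2.1 => ->; rewrite mcoeff_msupp mcoeffB Hm subrr eqxx.
have [wm2|wm2] := eqVneq (wdeg u m2) (wdeg u m).
  by rewrite -wm2; apply: IH => //; exact: le_F2m lF2.1.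
rewrite (wpart_below hF2 lF2); first exact: ideal0 (is_ideal_gen _).
by rewrite lt_neqAle wm2 (lew_wdeg _ (le_F2m _ lF2.1)) // dm2 dm.
Qed.

Lemma wpart_init e g F : J' F -> F \is e.-homog -> {in msupp F, forall x, wdeg u x <= g} ->
  init_ideal w J' (wpart u g F).
Proof.
move=> JF hF wF; have [->|nzF] := eqVneq F 0.
  by rewrite /wpart linear0; exact: ideal0 (is_ideal_gen _).
have [m lF] := lead_exists (@lew_total _ _ u) (@lew_trans _ _ u) nzF.
have [<-|wmg] := eqVneq (wdeg u m) g; first exact: wpart_lead_init (dhomog_mf hF lF.1) _ JF hF lF.
by rewrite (wpart_below hF lF) ?lt_neqAle ?wmg ?wF //; [exact: ideal0 (is_ideal_gen _) | case: lF].
Qed.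

Lemma init_ideal_sub_transfer p : init_ideal u J' p -> init_ideal w J' p.
Proof.
apply: ideal_gen_min; first exact: is_ideal_gen.
move=> _ [f [Jf ->]]; have [g [-> wf]] := in_w_top u f.
rewrite {1}(pihomog_partitionE (leqnn (msize f))) /wpart linear_sum /=.
apply: ideal_sum => [|e]; first exact: is_ideal_gen.
apply: wpart_init (homJ'.2 _ _ Jf) (pihomogP _ _ _) _ => x.
by rewrite msupp_hcomp => /andP[_ /wf].
Qed.

End Inclusion.

Lemma Cw_transfer (u w : 'I_n -> R) : Cw J u w -> Cw J' u w.
Proof.
move=> Cuw; have Cwu : same_ideal (init_ideal u J) (init_ideal w J) by move=> q; apply: iff_sym.
by move=> p; split; apply: init_ideal_sub_transfer.
Qed.

End InitialIdealTransfer.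

Definition msym_pre n (k : fieldType) (s : {perm 'I_n}) (J : {mpoly k[n]} -> Prop)
    (h : {mpoly k[n]}) := J (msym s h).

Section PermutedVariables.
Variables (n : nat) (k : fieldType) (R : realType).
Local Notation poly := {mpoly k[n]}.
Local Notation mono := 'X_{1..n}.
Local Notation "m # s" := [multinom m (s i) | i < n]
  (at level 40, left associativity, format "m # s").
Implicit Types (h p F : poly) (m : mono) (v : 'I_n -> R) (s : {perm 'I_n}).
Implicit Types (J : poly -> Prop).

Lemma pact_msym s h : pact s h = msym s h.
Proof.
rewrite /pact /comp_mpoly /msym /mmap; apply: eq_bigr => m _; congr (_ * _).
by apply: eq_bigr => i _; rewrite tnth_mktuple.
Qed.

Lemma msymK s : cancel (msym s : poly -> poly) (msym s^-1%g).
Proof. by move=> p; rewrite -msymMm mulgV msym1m. Qed.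

Lemma msymKV s : cancel (msym s^-1%g : poly -> poly) (msym s).
Proof. by move=> p; rewrite -msymMm mulVg msym1m. Qed.

Lemma msupp_msym s p m : (m \in msupp (msym s p)) = (m # s \in msupp p).
Proof. by rewrite !mcoeff_msupp mcoeff_sym. Qed.

Lemma lepm_mperm s m1 m2 : (m1 <= m2)%MM -> (m1 # s <= m2 # s)%MM.
Proof. by move/mnm_lepP => le12; apply/mnm_lepP => i; rewrite !mnmE. Qed.

Lemma wdeg_mperm s v m : wdeg (wact s v) (m # s) = wdeg v m.
Proof.
rewrite /wdeg /wact (reindex_inj (@perm_inj _ s^-1%g)) /=.
by apply: eq_bigr => i _; rewrite mnmE permKV.
Qed.

Lemma wactK s : cancel (@wact n R s) (wact s^-1%g).
Proof. by move=> v; apply: functional_extensionality => i; rewrite /wact permKV. Qed.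

Lemma wactKV s : cancel (@wact n R s^-1%g) (wact s).
Proof. by move=> v; apply: functional_extensionality => i; rewrite /wact permK. Qed.

Lemma msym_mrestr s P h : msym s (mrestr P h) = mrestr (fun m => P (m # s)) (msym s h).
Proof. by apply/mpolyP => m; rewrite mcoeff_sym !mcoeff_mrestr mcoeff_sym. Qed.

Lemma msym_hcomp s e h : msym s (hcomp e h) = hcomp e (msym s h).
Proof. by rewrite msym_mrestr; apply: eq_in_mrestr => m _; rewrite /= mdeg_mperm. Qed.

Lemma in_w_msym s v h : in_w v (msym s h) = msym s (in_w (wact s v) h).
Proof.
rewrite !in_wE msym_mrestr; apply: eq_in_mrestr => m _ /=.
apply/allP/allP => mmax x.
  move=> xh; rewrite -[x](mpermK s) !wdeg_mperm; apply: mmax.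
  by rewrite msupp_msym mpermK.
by rewrite msupp_msym => /mmax; rewrite !wdeg_mperm.
Qed.

Lemma deg_le_msym s h d : deg_le h d -> deg_le (msym s h) d.
Proof. by move=> hd m; rewrite msupp_msym => /hd; rewrite mdeg_mperm. Qed.

Lemma term_order_mperm s le : term_order le -> term_order (fun x y => le (x # s) (y # s)).
Proof.
have mpermD x y : (x + y)%MM # s = (x # s + y # s)%MM by apply/mnmP => i; rewrite !(mnmE, mnmDE).
case=> [[le_refl le_anti le_trans le_total] [le0 le_add]].
split; [split|split] => [x|x y /le_anti /mperm_inj|y x z|x y|x|x y m] //=.
- exact: le_trans.
- by rewrite (_ : 0%MM # s = 0%MM) //; apply/mnmP => i; rewrite !mnmE.
- by rewrite !mpermD; apply: le_add.
Qed.

Lemma homogeneous_msym_pre s J : homogeneous_ideal J -> homogeneous_ideal (msym_pre s J).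
Proof.
case=> idJ homJ; split; first exact: (is_ideal_preim (msym s)).
by move=> h e; rewrite /msym_pre msym_hcomp; apply: homJ.
Qed.

Lemma init_msym_pre s v J h :
  init_ideal (wact s v) (msym_pre s J) h <-> init_ideal v J (msym s h).
Proof.
have pre_init t (w : 'I_n -> R) K : is_ideal (fun h => init_ideal w K (msym t h)).
  exact: (is_ideal_preim (msym t) (is_ideal_gen _)).
split=> Ih.
  apply: (ideal_gen_min (pre_init s v J) _ Ih) => _ [f [Jf ->]].
  by rewrite -in_w_msym; apply: ideal_gen_sub; exists (msym s f).
rewrite -(msymK s h).
apply: (ideal_gen_min (pre_init s^-1%g (wact s v) (msym_pre s J)) _ Ih) => _ [f [Jf ->]].
apply: ideal_gen_sub; exists (msym s^-1%g f).
rewrite /msym_pre msymKV; split=> //.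
by rewrite -{1}(msymKV s f) in_w_msym msymK.
Qed.

Lemma Cw_msym_pre s J v1 v2 : Cw (msym_pre s J) (wact s v1) (wact s v2) <-> Cw J v1 v2.
Proof.
split=> E h; last by rewrite !init_msym_pre; exact (E _).
by rewrite -(msymKV s h) -(init_msym_pre s v2) -(init_msym_pre s v1); exact (E _).
Qed.

Lemma low_degree_leads_msym_pre d s le J :
  low_degree_leads d (fun x y => le (x # s) (y # s)) J -> low_degree_leads d le (msym_pre s J).
Proof.
move=> lowJ F m JF [mF leF].
have [F0 [m0 [JF0 [m0F0 le0] m0m dm0]]] : exists F0 m0, [/\ J F0,
    lead_mon (fun x y => le (x # s) (y # s)) F0 m0, (m0 <= m # s^-1%g)%MM & (mdeg m0 <= d)%N].
  apply: lowJ JF _; split=> [|x]; first by rewrite msupp_msym mpermK.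
  by rewrite msupp_msym /= mpermK => /leF.
exists (msym s^-1%g F0), (m0 # s); split.
- by rewrite /msym_pre msymKV.
- split=> [|y]; first by rewrite msupp_msym mpermKV.
  by rewrite msupp_msym => /le0; rewrite mpermK.
- by rewrite -(mpermK s m); apply: lepm_mperm.
- by rewrite mdeg_mperm.
Qed.

End PermutedVariables.

Section Symmetry.
Variables (n : nat) (k : fieldType) (R : realType) (d : nat).
Variables (G : {group {perm 'I_n}}) (I : {mpoly k[n]} -> Prop).
Hypothesis homI : homogeneous_ideal I.
Hypothesis genI : forall le, term_order le -> generated_in_deg_le (in_order le I) d.
Hypothesis monI : acts_monomially G I d.
Implicit Types (s : {perm 'I_n}) (v w : 'I_n -> R).

Lemma supp_transfer_msym_pre s : s \in G -> supp_transfer d I (msym_pre s I).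
Proof.
move=> sG f If df; have [h' [Ih' sh']] := monI If df sG.
exists (msym s^-1%g h'); split; first by rewrite /msym_pre msymKV.
by move=> m; rewrite msupp_msym sh' pact_msym -msupp_msym msymK.
Qed.

Lemma supp_transfer_msym_pre_inv s : s \in G -> supp_transfer d (msym_pre s I) I.
Proof.
move=> sG f If df; have [h' [Ih' sh']] := monI If (deg_le_msym (s := s) df) (groupVr sG).
by exists h'; split=> // m; rewrite sh' pact_msym msymK.
Qed.

Lemma wimage_Cw g : g \in G -> forall w, same_wset (wimage g (Cw I w)) (Cw I (wact g w)).
Proof.
move=> gG w; have sG : g^-1%g \in G by rewrite groupV.
have homJ := homogeneous_msym_pre g^-1%g homI.
have lowI v : low_degree_leads d (lew v) I by exact/low_degree_leads_gen/genI/term_order_lew.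
have lowJ v : low_degree_leads d (lew v) (msym_pre g^-1%g I).
  exact/low_degree_leads_msym_pre/low_degree_leads_gen/genI/term_order_mperm/term_order_lew.
move=> v; split=> [[u [Cwu ->]]|Cwv].
  apply/(Cw_msym_pre g^-1%g); rewrite !wactK.
  exact: Cw_transfer homI homJ (supp_transfer_msym_pre sG)
    (supp_transfer_msym_pre_inv sG) lowJ _ _ Cwu.
exists (wact g^-1%g v); split; last by rewrite wactKV.
apply: (Cw_transfer homJ homI (supp_transfer_msym_pre_inv sG) (supp_transfer_msym_pre sG) lowI).
by rewrite -[w](wactK g); apply/Cw_msym_pre.
Qed.

End Symmetry.

Section Closure.
Variables (n : nat) (R : realType).
Implicit Types (S : ('I_n -> R) -> Prop).

Lemma wimage_closure g S : same_wset (wimage g (closure_Rn S)) (closure_Rn (wimage g S)).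
Proof.
move=> v; split=> [[u [cu ->]] e e0|cv].
  by have [x [Sx xu]] := cu e e0; exists (wact g x); split; [exists x | move=> i; apply: xu].
exists (wact g^-1%g v); split; last by rewrite wactKV.
move=> e e0; have [_ [[x [Sx ->]] xv]] := cv e e0.
by exists x; split=> // i; have := xv (g^-1%g i); rewrite /wact permKV.
Qed.

Lemma closure_Rn_ext S1 S2 : same_wset S1 S2 -> same_wset (closure_Rn S1) (closure_Rn S2).
Proof.
move=> E v; split=> cv e e0; have [x [Sx xv]] := cv e e0; exists x; split=> //; exact/E.
Qed.

End Closure.

Theorem mainTheorem11 (n : nat) (k : fieldType) (R : realType)
  (G : {group {perm 'I_n}}) (I : {mpoly k[n]} -> Prop) (d : nat) :
  homogeneous_ideal I ->
  (forall le : rel 'X_{1..n}, term_order le ->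
     generated_in_deg_le (in_order le I) d) ->
  acts_monomially G I d ->
  forall g, g \in G ->
    (forall w : 'I_n -> R, exists w' : 'I_n -> R,
        same_wset (wimage g (Cw I w)) (Cw I w')) /\
    (forall w : 'I_n -> R, exists w' : 'I_n -> R,
        same_wset (wimage g (gfan_cone I w)) (gfan_cone I w')) /\
    (forall w' : 'I_n -> R, exists w : 'I_n -> R,
        same_wset (wimage g (gfan_cone I w)) (gfan_cone I w')).
Proof.
move=> homI genI monI g gG.
have CwE := wimage_Cw (R := R) homI genI monI gG.
have coneE (w : 'I_n -> R) : same_wset (wimage g (gfan_cone I w)) (gfan_cone I (wact g w)).
  by move=> v; rewrite (wimage_closure g _ v); exact (closure_Rn_ext (CwE w) v).
split; first by move=> w; exists (wact g w).
split; first by move=> w; exists (wact g w).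
by move=> w'; exists (wact g^-1%g w'); have := coneE (wact g^-1%g w'); rewrite wactKV.
Qed.
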